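(* Let $M=G/\Gamma$ be a 2-step nilmanifold with invariant abelian complex structure and $\mathfrak g^{1,0}=\mathfrak t^{1,0}\oplus\mathfrak c^{1,0}$, and assume $\dim_{\mathbb C}\mathfrak c^{1,0}=1$. Let $\Lambda=\Lambda_1+\Lambda_2$ be an invariant holomorphic Poisson bivector with $\Lambda_1\in\mathfrak t^{1,0}\otimes\mathfrak c^{1,0}$ and $\Lambda_2\in\wedge^2\mathfrak t^{1,0}$, and let $\bar\rho$ span $\mathfrak c^{*(0,1)}$. Then the spectral sequence of the Poisson bi-complex of $\Lambda$ degenerates on the first page if and only if (1) $\mathrm{ad}_{\Lambda_1}\bar\rho$ is $\bar\partial$-exact, and (2) $\Lambda_2$ lies in the center of the Schouten algebra $\oplus_{p,q}B^{p,q}$.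
   Context: $G$ is a simply connected nilpotent Lie group with Lie algebra $\mathfrak g$, $\Gamma$ a lattice, 2-step: $[\mathfrak g,\mathfrak g]\subseteq\mathfrak c$ (center). $J$ is a left-invariant abelian complex structure ($J^2=-1$, $[JA,JB]=[A,B]$), so $\mathfrak g^{1,0}$ is abelian. $\mathfrak g^{1,0}=\mathfrak t^{1,0}\oplus\mathfrak c^{1,0}$ with $\mathfrak c^{1,0}$ the $(1,0)$-part of the center, basis $W_\ell$, and $\mathfrak t^{1,0}$ with basis $T_k$, such that the only nonzero brackets are $[\bar T_k,T_j]=\sum_\ell E^\ell_{kj}W_\ell-\sum_\ell\bar E^\ell_{jk}\bar W_\ell$; dual basis $\omega^k,\rho^\ell$ with $d\omega^k=0$, $d\rho^\ell=\sum E^\ell_{ji}\omega^i\wedge\bar\omega^j$; $\mathfrak t^{*(0,1)}=\mathrm{span}\{\bar\omega^k\}$, $\mathfrak c^{*(0,1)}=\mathrm{span}\{\bar\rho^\ell\}$. $B^{p,q}=\wedge^p\mathfrak g^{1,0}\otimes\wedge^q\mathfrak g^{*(0,1)}$, viewed as invariant elements of $A^{p,q}=C^\infty(M,\wedge^pT^{1,0}M\otimes\wedge^qT^{*(0,1)}M)$, preserved by $\bar\partial$ (Dolbeault operator with values in $(p,0)$-vectors) and the Schouten bracket (graded extension of the Lie bracket of $(1,0)$-vector fields, $[V,\bar\omega]=\mathcal L_V\bar\omega$, $[\bar\omega_1,\bar\omega_2]=0$). A holomorphic Poisson structure is a holomorphic bivector $\Lambda$ with $[\Lambda,\Lambda]=0$;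 its Poisson bi-complex is $(A^{p,q},\mathrm{ad}_\Lambda,\bar\partial)$, $\mathrm{ad}_\Lambda=[\Lambda,\cdot]:A^{p,q}\to A^{p+1,q}$; the filtration by $p$ gives a spectral sequence with $E_1^{p,q}=H^q(M,\Theta^p)$ ($\Theta^p$ the sheaf of holomorphic $p$-vector fields) and $d_1$ induced by $\mathrm{ad}_\Lambda$. ''Degenerates on the first page'' means $d_1^{p,q}=0$ for all $p,q$. By a known result the inclusion $B^{p,q}\subset A^{p,q}$ induces isomorphisms $H^q(\mathfrak g^{p,0})\cong H^q(M,\Theta^p)$, where $H^q(\mathfrak g^{p,0})$ is the $\bar\partial$-cohomology of $B^{p,\bullet}$. *)

(* Algebraic (invariant) model of the Poisson bi-complex of a
   2-step nilmanifold with abelian complex structure and dim_C c^{1,0} = 1. *)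
From HB Require Import structures.
From mathcomp Require Import all_boot all_order all_algebra.
Set Implicit Arguments. Unset Strict Implicit. Unset Printing Implicit Defensive.
Import Order.TTheory GRing.Theory Num.Theory.
Local Open Scope ring_scope.

(* Exterior (super-commutative) algebra on odd generators indexed by a  *)
(* finite type I; an element is a function from sets of generators      *)
(* (monomials, ordered increasingly along enum_rank) to coefficients.   *)
Notation ext C I := {ffun {set I} -> C}.
Notation B C n := {ffun {set ('I_n.+1 * bool)%type} -> C}.

Section Exterior.
Variables (C : fieldType) (I : finType).

Definition mono (S : {set I}) : ext C I := [ffun T => (T == S)%:R].

(* sign of e_S /\ e_T -> e_(S u T) *)
Definition wsign (S T : {set I}) : C :=
  (-1) ^+ #|[set p : I * I | (p.1 \in S) && (p.2 \in T)
                              && (enum_rank p.2 < enum_rank p.1)%N]|.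

Definition wedge (P Q : ext C I) : ext C I :=
  [ffun U : {set I} => \sum_(S : {set I}) \sum_(T : {set I})
     (if [disjoint S & T] && (S :|: T == U) then P S * Q T * wsign S T else 0)].

(* left super-derivative with respect to the generator a:
   d_a e_S = (-1)^#{s in S | s < a} e_(S \ a) if a in S, 0 otherwise *)
Definition sderiv (a : I) (P : ext C I) : ext C I :=
  [ffun U : {set I} => if a \in U then 0
             else (-1) ^+ #|[set s in U | (enum_rank s < enum_rank a)%N]| * P (a |: U)].

Definition scal (c : C) (P : ext C I) : ext C I := [ffun U : {set I} => c * P U].

Definition gen (a : I) : ext C I := mono [set a].

(* Schouten bracket on the exterior algebra of a Lie algebra L with basis
   indexed by I and bracket of basis elements [x_a, x_b] = br a b :
   [x1..xk, y1..yl] = sum_(i,j) (-1)^(i+j) [xi,yj] /\ x1..^xi..xk /\ y1..^yj..yl *)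
Definition schouten (br : I -> I -> ext C I) (P Q : ext C I) : ext C I :=
  \sum_(a : I) \sum_(b : I) wedge (wedge (br a b) (sderiv a P)) (sderiv b Q).

(* the unique derivation (of total degree +1) extending D on generators
   (D takes values of even degree 2) *)
Definition derivation (D : I -> ext C I) (P : ext C I) : ext C I :=
  \sum_(a : I) wedge (D a) (sderiv a P).

End Exterior.
Arguments gen {C I} a.
Arguments mono {C I} S.

(* The concrete model: generators of L = g^{1,0} (+) g^{*(0,1)}.        *)
(* A generator (k, false) with k : 'I_n.+1 is the vector T_k (k < n) or *)
(* W (k = n); (k, true) is the form  bar omega^k (k < n) or bar rho.    *)
Definition gidx (n : nat) := ('I_n.+1 * bool)%type.

Section Model.
Variables (C : numClosedFieldType) (n : nat).
(* E k j = E^1_{kj}: [bar T_k, T_j] = E k j W - conj(E j k) bar W *)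
Variable E : 'M[C]_n.

Definition iT (k : 'I_n) : gidx n := (widen_ord (leqnSn n) k, false).
Definition iW : gidx n := (ord_max, false).
Definition iob (k : 'I_n) : gidx n := (widen_ord (leqnSn n) k, true).
Definition irb : gidx n := (ord_max, true).


Definition Bdeg (p q : nat) (P : B C n) : Prop :=
  forall S, P S != 0 ->
    #|[set a in S | ~~ a.2]| = p /\ #|[set a in S | a.2]| = q.

Definition LTrho (j : 'I_n) : B C n :=
  - \sum_(i < n) scal (E j i)^* (gen (iob i)).

Definition brL (a b : gidx n) : B C n :=
  \sum_(j < n) ((if (a == iT j) && (b == irb) then LTrho j else 0)
              - (if (a == irb) && (b == iT j) then LTrho j else 0)).

Definition sch (P Q : B C n) : B C n := schouten brL P Q.

Definition dbarGen (a : gidx n) : B C n :=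
  \sum_(j < n) (if a == iT j then
                  \sum_(k < n) scal (E k j) (wedge (gen (iob k)) (gen iW))
                else 0).

Definition dbar (P : B C n) : B C n := derivation dbarGen P.

Definition in_tc (P : B C n) : Prop :=
  forall S, P S != 0 -> exists k, S = [set iT k; iW].
Definition in_t2 (P : B C n) : Prop :=
  forall S, P S != 0 -> exists i j, i != j /\ S = [set iT i; iT j].

Definition dbar_exact_in (p q : nat) (P : B C n) : Prop :=
  exists Y, Bdeg p q Y /\ P = dbar Y.

(* d_1^{p,q} = 0 on E_1^{p,q} = H^q(g^{p,0}) (= H^q(M, Theta^p)):
   every dbar-closed x in B^{p,q} has ad_Lambda x dbar-exact in B^{p+1,.} *)
Definition E1_degenerate (L : B C n) : Prop :=
  forall (p q : nat) (x : B C n), Bdeg p q x -> dbar x = 0 ->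
    if q is q'.+1 then dbar_exact_in p.+1 q' (sch L x) else sch L x = 0.

(* c^{1,0} is the whole (1,0)-part of the center: no nonzero
   X = sum_k a_k T_k is central *)
Definition center_is_c : Prop :=
  forall a : 'I_n -> C,
    (forall j, \sum_(k < n) E j k * a k = 0) ->
    (forall j, \sum_(k < n) (E k j)^* * a k = 0) ->
    forall k, a k = 0.

End Model.

(** In the invariant model the bracket of two generators is nonzero only for
   the pairs (T_j, bar rho) and (bar rho, T_j).  Since Lambda = Lambda1 + Lambda2
   contains no bar rho, this gives the factorisation
   [ad_Lambda x = ad_Lambda bar rho /\ i_rho x], where i_rho is contraction with
   bar rho.  If d_1 = 0, applying it to the closed class bar rho shows that
   ad_Lambda bar rho is dbar-exact; conversely, if ad_Lambda bar rho = dbar Y,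
   then because i_rho anticommutes with dbar, every closed x satisfies
   [ad_Lambda x = dbar (Y /\ i_rho x)].
   Finally, every dbar-exact element contains the central generator W, as does
   ad_Lambda1 bar rho, whereas ad_Lambda2 bar rho does not.  Hence ad_Lambda bar rho
   is exact iff ad_Lambda1 bar rho is exact and ad_Lambda2 bar rho = 0, and the
   factorisation shows that the latter says exactly that Lambda2 is central. *)
From HB Require Import structures.
From mathcomp Require Import all_boot all_order all_algebra.
From mathcomp Require Import zify.
Import Order.TTheory GRing.Theory Num.Theory.
Local Open Scope ring_scope.
Set Implicit Arguments. Unset Strict Implicit. Unset Printing Implicit Defensive.

Lemma cardsU_disjoint (T : finType) (A B : {set T}) :
  [disjoint A & B] -> #|A :|: B| = (#|A| + #|B|)%N.
Proof. by move=> dAB; rewrite cardsU disjoint_setI0 // cards0 subn0. Qed.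

Lemma disjointsUl (T : finType) (A B D : {set T}) :
  [disjoint A :|: B & D] = [disjoint A & D] && [disjoint B & D].
Proof. by rewrite -!setI_eq0 setIUl setU_eq0. Qed.

Lemma disjointsUr (T : finType) (A B D : {set T}) :
  [disjoint A & B :|: D] = [disjoint A & B] && [disjoint A & D].
Proof. by rewrite -!setI_eq0 setIUr setU_eq0. Qed.

Lemma setD1_id (T : finType) (a : T) (A : {set T}) : a \notin A -> A :\ a = A.
Proof. by move=> aA; apply/setDidPl; rewrite disjoint_sym disjoints1. Qed.

Lemma disjoint_setD1C (T : finType) (a : T) (A B : {set T}) :
  [disjoint A :\ a & B] = [disjoint A & B :\ a].
Proof.
rewrite -!setI_eq0; congr (_ == _); apply/setP => x.
by rewrite !inE; case: (x == a); rewrite ?andbF.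
Qed.

Lemma signr_odd_eq (R : pzRingType) (m k : nat) :
  odd m = odd k -> (-1) ^+ m = (-1) ^+ k :> R.
Proof. by move=> e; rewrite -signr_odd e signr_odd. Qed.

Lemma signr_add_oddN (R : pzRingType) (m k : nat) :
  odd k = ~~ odd m -> (-1) ^+ m + (-1) ^+ k = 0 :> R.
Proof.
by move=> e; rewrite -signr_odd -[X in _ + X]signr_odd e; case: (odd m); rewrite ?addrN ?addNr.
Qed.

Section Exterior.
Variables (C : fieldType) (I : finType).
Implicit Types (P Q R : ext C I) (S T U : {set I}) (a b : I) (c : C).
Local Notation mono := (@mono C I).

Lemma ext0E U : (0 : ext C I) U = 0. Proof. by rewrite ffunE. Qed.
Lemma extDE P Q U : (P + Q) U = P U + Q U. Proof. by rewrite ffunE. Qed.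
Lemma extNE P U : (- P) U = - P U. Proof. by rewrite ffunE. Qed.
Lemma scalE c P U : scal c P U = c * P U. Proof. by rewrite ffunE. Qed.
Lemma monoE S U : (mono S : ext C I) U = (U == S)%:R. Proof. by rewrite ffunE. Qed.
Lemma ext_sumE (J : Type) (r : seq J) (p : pred J) (F : J -> ext C I) U :
  (\sum_(j <- r | p j) F j) U = \sum_(j <- r | p j) F j U.
Proof. by rewrite sum_ffunE. Qed.

Lemma scal1r P : scal 1 P = P.
Proof. by apply/ffunP => U; rewrite scalE mul1r. Qed.
Lemma scal0r P : scal 0 P = 0.
Proof. by apply/ffunP => U; rewrite scalE ext0E mul0r. Qed.
Lemma scalr0 c : scal c (0 : ext C I) = 0.
Proof. by apply/ffunP => U; rewrite scalE ext0E mulr0. Qed.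
Lemma scalA c d P : scal c (scal d P) = scal (c * d) P.
Proof. by apply/ffunP => U; rewrite !scalE mulrA. Qed.
Lemma scalDr c P Q : scal c (P + Q) = scal c P + scal c Q.
Proof. by apply/ffunP => U; rewrite !(scalE, extDE) mulrDr. Qed.
Lemma scalDl c d P : scal (c + d) P = scal c P + scal d P.
Proof. by apply/ffunP => U; rewrite !(scalE, extDE) mulrDl. Qed.
Lemma scalN1r P : scal (-1) P = - P.
Proof. by apply/ffunP => U; rewrite !(scalE, extNE) mulN1r. Qed.

Definition ext_linear (f : ext C I -> ext C I) :=
  forall c P Q, f (scal c P + Q) = scal c (f P) + f Q.

Section ExtLinear.
Variable f : ext C I -> ext C I.
Hypothesis f_lin : ext_linear f.

Lemma ext_linear0 : f 0 = 0.
Proof. by have := f_lin (-1) 0 0; rewrite scalr0 addr0 scalN1r addNr. Qed.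
Lemma ext_linearD P Q : f (P + Q) = f P + f Q.
Proof. by rewrite -{1}[P]scal1r f_lin scal1r. Qed.
Lemma ext_linearZ c P : f (scal c P) = scal c (f P).
Proof. by rewrite -[scal c P]addr0 f_lin ext_linear0 addr0. Qed.
Lemma ext_linearN P : f (- P) = - f P.
Proof. by rewrite -scalN1r ext_linearZ scalN1r. Qed.
Lemma ext_linear_sum (J : Type) (r : seq J) (p : pred J) (F : J -> ext C I) :
  f (\sum_(j <- r | p j) F j) = \sum_(j <- r | p j) f (F j).
Proof. exact: (big_morph f ext_linearD ext_linear0). Qed.
End ExtLinear.

Lemma mono_expansion P : P = \sum_(S : {set I}) scal (P S) (mono S).
Proof.
apply/ffunP => U; rewrite ext_sumE (bigD1 U) //= big1 => [|S /negbTE nS].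
  by rewrite scalE monoE eqxx mulr1 addr0.
by rewrite scalE monoE eq_sym nS mulr0.
Qed.

Lemma ext_linear_eq f g : ext_linear f -> ext_linear g ->
  (forall S, f (mono S) = g (mono S)) -> f =1 g.
Proof.
move=> f_lin g_lin e P; rewrite (mono_expansion P) !ext_linear_sum //.
by apply: eq_bigr => S _; rewrite !ext_linearZ // e.
Qed.

Lemma ext_linear_comp f g : ext_linear f -> ext_linear g -> ext_linear (f \o g).
Proof. by move=> f_lin g_lin c P Q /=; rewrite g_lin f_lin. Qed.

Lemma ext_linear_add f g : ext_linear f -> ext_linear g -> ext_linear (fun P => f P + g P).
Proof.
move=> f_lin g_lin c P Q; rewrite f_lin g_lin scalDr.
by rewrite -!addrA; congr (_ + _); rewrite addrCA.
Qed.

Lemma ext_linear_opp f : ext_linear f -> ext_linear (fun P => - f P).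
Proof. by move=> f_lin c P Q; rewrite f_lin opprD -!scalN1r !scalA mulrC. Qed.

Definition wedge_coef S T U : C :=
  if [disjoint S & T] && (S :|: T == U) then wsign C S T else 0.

Lemma wedgeE P Q U :
  wedge P Q U = \sum_(S : {set I}) \sum_(T : {set I}) P S * Q T * wedge_coef S T U.
Proof.
rewrite ffunE; apply: eq_bigr => S _; apply: eq_bigr => T _.
by rewrite /wedge_coef; case: ifP; rewrite ?mulr0.
Qed.

Lemma sderivE a P U :
  sderiv a P U = (if a \in U then 0
                  else (-1) ^+ #|[set s in U | (enum_rank s < enum_rank a)%N]|)
                 * P (a |: U).
Proof. by rewrite ffunE; case: ifP; rewrite ?mul0r. Qed.

Definition parity P : ext C I := [ffun U : {set I} => (-1) ^+ #|U| * P U].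

Lemma wedge_linearl Q : ext_linear (fun P => wedge P Q).
Proof.
move=> c P1 P2; apply/ffunP => U; rewrite !(extDE, scalE, wedgeE) mulr_sumr -big_split.
apply: eq_bigr => S _; rewrite mulr_sumr -big_split; apply: eq_bigr => T _ /=.
by rewrite !(extDE, scalE) !mulrA !mulrDl.
Qed.

Lemma wedge_linearr P : ext_linear (wedge P).
Proof.
move=> c Q1 Q2; apply/ffunP => U; rewrite !(extDE, scalE, wedgeE) mulr_sumr -big_split.
apply: eq_bigr => S _; rewrite mulr_sumr -big_split; apply: eq_bigr => T _ /=.
by rewrite !(extDE, scalE) mulrDr mulrDl !mulrA [c * P S]mulrC.
Qed.

Lemma sderiv_linear a : ext_linear (sderiv a).
Proof.
move=> c P1 P2; apply/ffunP => U; rewrite !(extDE, scalE, sderivE) ?(extDE, scalE).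
by rewrite mulrDr mulrCA.
Qed.

Lemma parity_linear : ext_linear parity.
Proof.
move=> c P1 P2; apply/ffunP => U; rewrite !(extDE, scalE, ffunE) ?(extDE, scalE).
by rewrite mulrDr mulrCA.
Qed.

Lemma wedge0l P : wedge 0 P = 0. Proof. exact: ext_linear0 (wedge_linearl P). Qed.
Lemma wedge0r P : wedge P 0 = 0. Proof. exact: ext_linear0 (wedge_linearr P). Qed.
Lemma wedgeZl c P Q : wedge (scal c P) Q = scal c (wedge P Q).
Proof. exact: ext_linearZ (wedge_linearl Q) c P. Qed.
Lemma wedgeZr c P Q : wedge P (scal c Q) = scal c (wedge P Q).
Proof. exact: ext_linearZ (wedge_linearr P) c Q. Qed.
Lemma sderiv0 a : sderiv a (0 : ext C I) = 0. Proof. exact: ext_linear0 (sderiv_linear a). Qed.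
Lemma sderivZ a c P : sderiv a (scal c P) = scal c (sderiv a P).
Proof. exact: ext_linearZ (sderiv_linear a) c P. Qed.

Definition inversions S T :=
  #|[set p : I * I | (p.1 \in S) && (p.2 \in T) && (enum_rank p.2 < enum_rank p.1)%N]|.

Lemma wsignE S T : wsign C S T = (-1) ^+ inversions S T. Proof. by []. Qed.

Lemma inversionsUl S1 S2 T : [disjoint S1 & S2] ->
  inversions (S1 :|: S2) T = (inversions S1 T + inversions S2 T)%N.
Proof.
move=> dS; rewrite /inversions -cardsU_disjoint.
  by apply: eq_card => p; rewrite !inE -!andbA andb_orl.
rewrite -setI_eq0; apply/eqP/setP => p; rewrite !inE.
by case h1: (p.1 \in S1); rewrite ?(disjointFr dS h1) !(andbF, andFb).
Qed.

Lemma inversionsUr S T1 T2 : [disjoint T1 & T2] ->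
  inversions S (T1 :|: T2) = (inversions S T1 + inversions S T2)%N.
Proof.
move=> dT; rewrite /inversions -cardsU_disjoint.
  by apply: eq_card => p; rewrite !inE -!andbA andb_orl andb_orr.
rewrite -setI_eq0; apply/eqP/setP => p; rewrite !inE.
by case h1: (p.2 \in T1); rewrite ?(disjointFr dT h1) !(andbF, andFb).
Qed.

Lemma inversions_sym S T : [disjoint S & T] ->
  (inversions S T + inversions T S = #|S| * #|T|)%N.
Proof.
move=> dST.
have swap_inj : injective (fun p : I * I => (p.2, p.1)) by case=> x y [] u v /= [] -> ->.
have -> : inversions T S = #|[set p : I * I | (p.1 \in S) && (p.2 \in T)
                              && (enum_rank p.1 < enum_rank p.2)%N]|.
  rewrite /inversions -(card_preimset _ swap_inj); apply: eq_card => -[x y].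
  by rewrite !inE /= [(y \in T) && _]andbC.
rewrite /inversions -cardsX -cardsU_disjoint.
  apply: eq_card => -[x y]; rewrite !inE /= -andb_orr.
  case xS: (x \in S); case yT: (y \in T) => //=.
  have ne_xy : (enum_rank x : nat) != enum_rank y.
    by apply: contraTneq yT => /val_inj/enum_rank_inj <-; rewrite (disjointFr dST xS).
  by rewrite -neq_ltn eq_sym ne_xy.
rewrite -setI_eq0; apply/eqP/setP => -[x y]; rewrite !inE /=.
case: (x \in S); case: (y \in T); rewrite ?andbF //=.
by apply/negP => /andP[lt1 lt2]; move: (ltn_trans lt1 lt2); rewrite ltnn.
Qed.

Lemma inversions1l a T :
  inversions [set a] T = #|[set t in T | (enum_rank t < enum_rank a)%N]|.
Proof.
rewrite /inversions -[RHS](card_imset _ (fun u v (e : (a, u) = (a, v)) => congr1 snd e)).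
apply: eq_card => -[x y]; rewrite !inE /=.
apply/idP/imsetP => [/andP[/andP[/eqP -> yT] lt] | [t]].
  by exists y => //; rewrite inE yT lt.
by rewrite inE => /andP[tT lt] [-> ->]; rewrite eqxx tT lt.
Qed.

Lemma inversions0r S : inversions S set0 = 0%N.
Proof.
by apply/eqP; rewrite cards_eq0; apply/eqP/setP => p; rewrite !inE andbF.
Qed.

Lemma wedge_mono S T : wedge (mono S) (mono T) =
  if [disjoint S & T] then scal (wsign C S T) (mono (S :|: T)) else 0.
Proof.
apply/ffunP => U; rewrite wedgeE (bigD1 S) //= [X in _ + X]big1 => [|S' nS]; last first.
  by apply: big1 => T' _; rewrite monoE (negbTE nS) !mul0r.
rewrite addr0 (bigD1 T) //= [X in _ + X]big1 => [|T' nT]; last first.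
  by rewrite !monoE eqxx (negbTE nT) mulr0 mul0r.
rewrite !monoE !eqxx !mul1r !addr0 /wedge_coef.
case: [disjoint S & T] => /=; last by rewrite ext0E.
by rewrite scalE monoE eq_sym; case: (_ == _); rewrite ?mulr1 ?mulr0.
Qed.

Lemma sderiv_mono a S : sderiv a (mono S) =
  if a \in S then scal (wsign C [set a] (S :\ a)) (mono (S :\ a)) else 0.
Proof.
apply/ffunP => U; rewrite sderivE monoE.
case: ifP => aU.
  rewrite mul0r; case: ifP => aS; last by rewrite ext0E.
  rewrite scalE monoE; case: eqP => [eU|]; last by rewrite mulr0.
  by move: aU; rewrite eU !inE eqxx.
case: ifP => aS; last first.
  case: eqP => [eU|]; last by rewrite mulr0 ext0E.
  by move: aS; rewrite -eU !inE eqxx.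
rewrite scalE monoE; case: eqP => [eU|neU].
  have -> : U = S :\ a by rewrite -eU setU1K ?aU.
  by rewrite eqxx !mulr1 wsignE inversions1l.
case: eqP => [eU2|]; last by rewrite !mulr0.
by case: neU; rewrite eU2 setD1K.
Qed.

Lemma parity_mono S : parity (mono S) = scal ((-1) ^+ #|S|) (mono S).
Proof.
by apply/ffunP => U; rewrite ffunE scalE monoE; case: eqP => [->|]; rewrite ?mulr0.
Qed.

Lemma wedge1r P : wedge P (mono set0) = P.
Proof.
apply: (ext_linear_eq (wedge_linearl _) (fun _ _ _ => erefl)) => S /=.
rewrite wedge_mono (_ : [disjoint S & set0]); last by rewrite -setI_eq0 setI0.
by rewrite setU0 wsignE inversions0r expr0 scal1r.
Qed.

Lemma wedgeA_mono S T U :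
  wedge (wedge (mono S) (mono T)) (mono U) = wedge (mono S) (wedge (mono T) (mono U)).
Proof.
rewrite !wedge_mono.
case dST: [disjoint S & T]; case dTU: [disjoint T & U];
  rewrite ?wedge0l ?wedge0r ?wedgeZl ?wedgeZr ?wedge_mono ?disjointsUl ?disjointsUr ?dST ?dTU //=.
- rewrite andbT; case: [disjoint S & U]; last by rewrite !scalr0.
  rewrite !scalA setUA; congr scal; rewrite !wsignE -!exprD.
  by rewrite inversionsUl // inversionsUr //; congr (_ ^+ _); lia.
- by rewrite andbF scalr0.
- by rewrite scalr0.
Qed.

Lemma wedgeA P Q R : wedge (wedge P Q) R = wedge P (wedge Q R).
Proof.
move: P; apply: (ext_linear_eq (ext_linear_comp (wedge_linearl R) (wedge_linearl Q))
                               (wedge_linearl _)) => S /=.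
move: Q; apply: (ext_linear_eq (ext_linear_comp (wedge_linearl R) (wedge_linearr _))
                               (ext_linear_comp (wedge_linearr _) (wedge_linearl R))) => T /=.
move: R; apply: (ext_linear_eq (wedge_linearr _)
                               (ext_linear_comp (wedge_linearr _) (wedge_linearr _))) => U /=.
exact: wedgeA_mono.
Qed.

Lemma inversionsD1l a S T : a \in S ->
  inversions S T = (inversions [set a] T + inversions (S :\ a) T)%N.
Proof. by move=> aS; rewrite -inversionsUl ?setD1K // disjoints1 setD11. Qed.

Lemma inversionsD1r a S T : a \in T ->
  inversions S T = (inversions S [set a] + inversions S (T :\ a))%N.
Proof. by move=> aT; rewrite -inversionsUr ?setD1K // disjoints1 setD11. Qed.

Lemma sderiv_wedge_mono_l a S T : a \in S -> a \notin T ->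
  sderiv a (wedge (mono S) (mono T)) = wedge (sderiv a (mono S)) (mono T).
Proof.
move=> aS aT; rewrite wedge_mono sderiv_mono aS wedgeZl wedge_mono.
rewrite disjoint_setD1C (setD1_id aT).
case dST: [disjoint S & T]; last by rewrite sderiv0 scalr0.
rewrite sderivZ sderiv_mono inE aS /= !scalA setDUl (setD1_id aT).
congr scal; rewrite !wsignE -!exprD; apply: signr_odd_eq.
rewrite (inversionsD1l T aS) inversionsUr ?disjoint_setD1C ?(setD1_id aT) //; lia.
Qed.

Lemma sderiv_wedge_mono_r a S T : a \notin S -> a \in T ->
  sderiv a (wedge (mono S) (mono T)) = wedge (parity (mono S)) (sderiv a (mono T)).
Proof.
move=> aS aT; rewrite parity_mono wedgeZl wedge_mono sderiv_mono aT wedgeZr wedge_mono.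
rewrite -disjoint_setD1C (setD1_id aS).
case dST: [disjoint S & T]; last by rewrite sderiv0 !scalr0.
rewrite sderivZ sderiv_mono inE aT orbT !scalA setDUl (setD1_id aS).
congr scal; rewrite !wsignE -!exprD; apply: signr_odd_eq.
have := inversions_sym (_ : [disjoint [set a] & S]); rewrite disjoints1 cards1 => /(_ aS).
rewrite (inversionsD1r S aT) inversionsUr -?disjoint_setD1C ?(setD1_id aS) //; lia.
Qed.

Lemma sderiv_wedge_mono_lr a S T : a \in S -> a \in T ->
  wedge (sderiv a (mono S)) (mono T) + wedge (parity (mono S)) (sderiv a (mono T)) = 0.
Proof.
move=> aS aT; rewrite parity_mono !sderiv_mono aS aT wedgeZl wedgeZr wedgeZl !wedge_mono.
rewrite disjoint_setD1C; case: [disjoint S & T :\ a]; last by rewrite !scalr0 addr0.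
have -> : S :\ a :|: T = S :|: T :\ a.
  by apply/setP => x; rewrite !inE; case: (x =P a) => [->|]; rewrite ?aS ?aT ?orbT.
rewrite !scalA -scalDl !wsignE -!exprD signr_add_oddN ?scal0r //.
have := inversions_sym (_ : [disjoint [set a] & S :\ a]); rewrite disjoints1 setD11 cards1.
rewrite (inversionsD1l (T :\ a) aS) (inversionsD1r (S :\ a) aT) (cardsD1 a S) aS => /(_ isT).
lia.
Qed.

Lemma sderiv_wedge_mono a S T : sderiv a (wedge (mono S) (mono T)) =
  wedge (sderiv a (mono S)) (mono T) + wedge (parity (mono S)) (sderiv a (mono T)).
Proof.
case aS: (a \in S); case aT: (a \in T).
- rewrite sderiv_wedge_mono_lr // wedge_mono.
  have -> : [disjoint S & T] = false by apply: negbTE; apply: contraTN aT => /disjointFr ->.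
  exact: sderiv0.
- by rewrite sderiv_wedge_mono_l ?aT // [sderiv a (mono T)]sderiv_mono aT wedge0r addr0.
- by rewrite sderiv_wedge_mono_r ?aS // [sderiv a (mono S)]sderiv_mono aS wedge0l add0r.
- rewrite !sderiv_mono aS aT wedge0l wedge0r addr0 wedge_mono.
  by case: ifP => _; rewrite ?sderivZ ?sderiv_mono ?inE ?aS ?aT ?scalr0 ?sderiv0.
Qed.

Lemma sderiv_wedge a P Q :
  sderiv a (wedge P Q) = wedge (sderiv a P) Q + wedge (parity P) (sderiv a Q).
Proof.
move: P; apply: (ext_linear_eq (ext_linear_comp (sderiv_linear a) (wedge_linearl Q))
   (ext_linear_add (ext_linear_comp (wedge_linearl Q) (sderiv_linear a))
                   (ext_linear_comp (wedge_linearl _) parity_linear))) => S /=.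
move: Q; apply: (ext_linear_eq (ext_linear_comp (sderiv_linear a) (wedge_linearr _))
   (ext_linear_add (wedge_linearr _)
                   (ext_linear_comp (wedge_linearr _) (sderiv_linear a)))) => T /=.
exact: sderiv_wedge_mono.
Qed.

Lemma sderivC_mono a b S : sderiv a (sderiv b (mono S)) = - sderiv b (sderiv a (mono S)).
Proof.
rewrite (sderiv_mono b S) (sderiv_mono a S).
case bS: (b \in S); case aS: (a \in S);
  rewrite ?sderivZ ?sderiv0 ?oppr0 ?sderiv_mono ?inE ?aS ?bS ?andbF ?scalr0 ?oppr0 //=.
have [<-|nab] := eqVneq a b; first by rewrite /= !scalr0 oppr0.
have Sab : S :\ a :\ b = S :\ b :\ a by rewrite !setDDl setUC.
rewrite /= Sab !scalA -scalN1r scalA.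
congr scal; rewrite !wsignE -[-1 : C]expr1 -!exprD; apply: signr_odd_eq.
have := inversions_sym (_ : [disjoint [set a] & [set b]]).
rewrite disjoints1 !cards1 inE => /(_ nab).
rewrite (inversionsD1r [set a] (_ : b \in S :\ a)) ?inE ?(eq_sym b a) ?nab //.
rewrite (inversionsD1r [set b] (_ : a \in S :\ b)) ?inE ?nab //.
rewrite Sab; lia.
Qed.

Lemma sderivC a b P : sderiv a (sderiv b P) = - sderiv b (sderiv a P).
Proof.
move: P; apply: (ext_linear_eq (ext_linear_comp (sderiv_linear a) (sderiv_linear b))
   (ext_linear_opp (ext_linear_comp (sderiv_linear b) (sderiv_linear a)))).
exact: sderivC_mono.
Qed.

Definition supported (f : pred {set I}) P := [forall S, (P S != 0) ==> f S].

Lemma supportedP (f : pred {set I}) P :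
  reflect (forall S, P S != 0 -> f S) (supported f P).
Proof. by apply: (iffP forallP) => fP S; apply/implyP/fP. Qed.

Lemma supportedT P : supported predT P. Proof. by apply/supportedP. Qed.

Lemma supportedW (f g : pred {set I}) P :
  supported f P -> (forall S, f S -> g S) -> supported g P.
Proof. by move=> /supportedP fP fg; apply/supportedP => S /fP /fg. Qed.

Lemma wedge_neq0 P Q U : wedge P Q U != 0 ->
  exists S T, [/\ [disjoint S & T], S :|: T = U, P S != 0 & Q T != 0].
Proof.
move=> PQU.
have : [exists S : {set I}, [exists T : {set I},
         [&& [disjoint S & T], S :|: T == U, P S != 0 & Q T != 0]]].
  apply: contraNT PQU => /existsPn noST; rewrite wedgeE; apply/eqP.
  apply: big1 => S _; apply: big1 => T _.
  move/existsPn: (noST S) => /(_ T); rewrite /wedge_coef.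
  case: [disjoint S & T]; case: (S :|: T == U) => //=; rewrite ?mulr0 //.
  by case: (P S =P 0) => [->|_]; case: (Q T =P 0) => [->|_]; rewrite ?mulr0 ?mul0r.
by case/existsP => S /existsP [T /and4P [d /eqP e PS QT]]; exists S, T.
Qed.

Lemma supported_wedge (f g h : pred {set I}) P Q : supported f P -> supported g Q ->
  (forall S T, [disjoint S & T] -> f S -> g T -> h (S :|: T)) -> supported h (wedge P Q).
Proof.
move=> /supportedP fP /supportedP gQ fgh; apply/supportedP => U.
by case/wedge_neq0 => S [T [dST <- PS QT]]; apply: fgh dST (fP _ PS) (gQ _ QT).
Qed.

Lemma supported_sum (f : pred {set I}) (J : Type) (r : seq J) (p : pred J) (F : J -> ext C I) :
  (forall j, p j -> supported f (F j)) -> supported f (\sum_(j <- r | p j) F j).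
Proof.
move=> fF; apply/supportedP => U; rewrite ext_sumE; apply: contraNT => nfU.
apply/eqP; apply: big1 => j pj; apply/eqP; apply: contraNT nfU.
exact: (supportedP _ _ (fF j pj)).
Qed.

Lemma supportedD (f : pred {set I}) P Q : supported f P -> supported f Q -> supported f (P + Q).
Proof.
move=> /supportedP fP /supportedP fQ; apply/supportedP => U; rewrite extDE.
by have [->|/fP //] := eqVneq (P U) 0; rewrite add0r; apply: fQ.
Qed.

Lemma supportedN (f : pred {set I}) P : supported f P -> supported f (- P).
Proof. by move=> /supportedP fP; apply/supportedP => U; rewrite extNE oppr_eq0; apply: fP. Qed.

Lemma supportedZ (f : pred {set I}) c P : supported f P -> supported f (scal c P).
Proof.
by move=> /supportedP fP; apply/supportedP => U; rewrite scalE mulf_eq0 negb_or => /andP[_ /fP].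
Qed.

Lemma supported_mono (f : pred {set I}) S : f S -> supported f (mono S).
Proof.
by move=> fS; apply/supportedP => U; rewrite monoE; have [->|] := eqVneq U S; rewrite ?eqxx.
Qed.

Lemma sderiv_neq0 a P U : sderiv a P U != 0 -> (a \notin U) && (P (a |: U) != 0).
Proof.
rewrite sderivE; case: ifP => aU; first by rewrite mul0r eqxx.
by rewrite mulf_eq0 negb_or => /andP[_ ->].
Qed.

Lemma sderiv_eq0 a P : supported (fun S => a \notin S) P -> sderiv a P = 0.
Proof.
move=> /supportedP aP; apply/ffunP => U; rewrite sderivE ext0E.
by have [->|/aP] := eqVneq (P (a |: U)) 0; rewrite ?mulr0 // setU11.
Qed.

Lemma supported_predC_eq0 (f : pred {set I}) P Q R :
  supported f P -> supported (fun S => ~~ f S) Q -> supported f R -> P + Q = R -> Q = 0.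
Proof.
move=> /supportedP fP /supportedP fQ /supportedP fR PQR; apply/ffunP => U; rewrite ext0E.
have [//|QU] := eqVneq (Q U) 0.
have nfU : ~~ f U := fQ U QU.
have /eqP P0 : P U == 0 := contraNT (fP U) nfU.
have /eqP R0 : R U == 0 := contraNT (fR U) nfU.
by move/ffunP: PQR => /(_ U); rewrite extDE P0 R0 add0r.
Qed.

Definition ext_even P := supported (fun S => ~~ odd #|S|) P.

Lemma wedge_monoC_even S T : ~~ odd #|S| -> wedge (mono S) (mono T) = wedge (mono T) (mono S).
Proof.
move=> evS; rewrite !wedge_mono disjoint_sym setUC; case: ifP => // dTS.
congr scal; rewrite !wsignE; apply: signr_odd_eq.
have := inversions_sym dTS; have : odd (#|T| * #|S|) = false by rewrite oddM (negbTE evS) andbF.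
move: (#|T| * #|S|)%N => k; lia.
Qed.

Lemma wedgeC_even G P : ext_even G -> wedge G P = wedge P G.
Proof.
move=> evG; rewrite (mono_expansion G) (ext_linear_sum (wedge_linearl P)).
rewrite (ext_linear_sum (wedge_linearr P)); apply: eq_bigr => S _; rewrite wedgeZl wedgeZr.
have [->|GS] := eqVneq (G S) 0; first by rewrite !scal0r.
congr scal; move: P; apply: (ext_linear_eq (wedge_linearr _) (wedge_linearl _)) => T.
exact: wedge_monoC_even (supportedP _ _ evG _ GS).
Qed.

Lemma parity_even G : ext_even G -> parity G = G.
Proof.
move=> evG; apply/ffunP => U; rewrite ffunE.
have [->|GU] := eqVneq (G U) 0; first by rewrite mulr0.
by rewrite -signr_odd (negbTE (supportedP _ _ evG _ GU)) expr0 mul1r.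
Qed.

Section Derivation.
Variable D : I -> ext C I.
Hypothesis D_even : forall a, ext_even (D a).

Lemma derivation_wedge P Q :
  derivation D (wedge P Q) = wedge (derivation D P) Q + wedge (parity P) (derivation D Q).
Proof.
rewrite /derivation (ext_linear_sum (wedge_linearl Q)) (ext_linear_sum (wedge_linearr _)).
rewrite -big_split; apply: eq_bigr => a _ /=.
rewrite sderiv_wedge (ext_linearD (wedge_linearr _)) wedgeA; congr (_ + _).
by rewrite -wedgeA (wedgeC_even (parity P) (D_even a)) wedgeA.
Qed.

Lemma sderiv_derivation b P : (forall a, supported (fun S => b \notin S) (D a)) ->
  sderiv b (derivation D P) = - derivation D (sderiv b P).
Proof.
move=> Db; rewrite /derivation (ext_linear_sum (sderiv_linear b)) -sumrN.
apply: eq_bigr => a _; rewrite sderiv_wedge (sderiv_eq0 (Db a)) wedge0l add0r.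
by rewrite (parity_even (D_even a)) sderivC (ext_linearN (wedge_linearr _)).
Qed.
End Derivation.

End Exterior.

Lemma card_setIdU (T : finType) (p : pred T) (A B : {set T}) : [disjoint A & B] ->
  #|[set x in A :|: B | p x]| = (#|[set x in A | p x]| + #|[set x in B | p x]|)%N.
Proof.
move=> dAB; rewrite -cardsU_disjoint.
  by apply: eq_card => x; rewrite !inE andb_orl.
by rewrite !setIdE; apply: disjointWl (subsetIl _ _) (disjointWr (subsetIl _ _) dAB).
Qed.

Lemma sum_if_pair_eq (V : nmodType) (I1 I2 : finType) (x : I1) (y : I2) (F : I1 -> I2 -> V) :
  \sum_a \sum_b (if (a == x) && (b == y) then F a b else 0) = F x y.
Proof.
rewrite (bigD1 x) //= eqxx /= -big_mkcond big_pred1_eq big1 ?addr0 // => a /negbTE nax.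
by rewrite nax big1.
Qed.

Section Model.
Variables (C : numClosedFieldType) (n : nat) (E : 'M[C]_n).
Local Notation Bn := (B C n).
Local Notation irb := (@irb n).
Local Notation iW := (@iW n).

Lemma irb_iT j : irb != iT j. Proof. by rewrite xpair_eqE andbF. Qed.
Lemma irb_iW : irb != iW. Proof. by rewrite xpair_eqE andbF. Qed.
Lemma iW_iob k : iW != iob k. Proof. by rewrite xpair_eqE andbF. Qed.

Lemma ord_max_widenF (k : 'I_n) : (ord_max == widen_ord (leqnSn n) k :> 'I_n.+1) = false.
Proof. by rewrite -val_eqE /= gtn_eqF. Qed.

Lemma iW_iT j : iW != iT j. Proof. by rewrite xpair_eqE ord_max_widenF. Qed.
Lemma irb_iob k : irb != iob k. Proof. by rewrite xpair_eqE ord_max_widenF. Qed.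

(* [ad_L bar rho]; the only brackets with bar rho are [T_j, bar rho] = L_(T_j) bar rho *)
Definition rho_bracket (L : Bn) : Bn := \sum_(j < n) wedge (LTrho E j) (sderiv (iT j) L).

Lemma rho_bracketD L1 L2 : rho_bracket (L1 + L2) = rho_bracket L1 + rho_bracket L2.
Proof.
rewrite /rho_bracket -big_split; apply: eq_bigr => j _.
by rewrite (ext_linearD (sderiv_linear _)) (ext_linearD (wedge_linearr _)).
Qed.

Lemma sch_rho_factor (L X : Bn) : supported (fun S => irb \notin S) L ->
  sch E L X = wedge (rho_bracket L) (sderiv irb X).
Proof.
move=> Lrho; have dL : sderiv irb L = 0 := sderiv_eq0 Lrho.
have term a b : wedge (wedge (brL E a b) (sderiv a L)) (sderiv b X) =
    \sum_(j < n) (if (a == iT j) && (b == irb)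
                  then wedge (wedge (LTrho E j) (sderiv a L)) (sderiv b X) else 0).
  have [->|na] := eqVneq a irb.
    by rewrite dL wedge0r wedge0l big1 // => j _; rewrite (negbTE (irb_iT j)).
  rewrite /brL (ext_linear_sum (wedge_linearl _)) (ext_linear_sum (wedge_linearl _)).
  by apply: eq_bigr => j _; rewrite (negbTE na) /= subr0; case: ifP; rewrite ?wedge0l.
rewrite /sch /schouten /rho_bracket (ext_linear_sum (wedge_linearl _)).
under eq_bigr => a _ do under eq_bigr => b _ do rewrite term.
under eq_bigr => a _ do rewrite exchange_big.
by rewrite exchange_big; apply: eq_bigr => j _; rewrite sum_if_pair_eq.
Qed.

Lemma sch_rho (L : Bn) : supported (fun S => irb \notin S) L ->
  sch E L (gen irb) = rho_bracket L.
Proof.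
move=> Lrho; rewrite sch_rho_factor // sderiv_mono inE eqxx setDv.
by rewrite wsignE inversions0r expr0 scal1r wedge1r.
Qed.

Lemma sch_eq0_iff (L : Bn) : supported (fun S => irb \notin S) L ->
  (forall X, sch E L X = 0) <-> rho_bracket L = 0.
Proof.
move=> Lrho; split=> [/(_ (gen irb))|rho0 X]; first by rewrite sch_rho.
by rewrite sch_rho_factor // rho0 wedge0l.
Qed.

Lemma in_tc_no_rho (L : Bn) : in_tc L -> supported (fun S => irb \notin S) L.
Proof. by move=> tcL; apply/supportedP => S /tcL [k ->]; rewrite !inE negb_or irb_iT irb_iW. Qed.

Lemma in_t2_no_rho (L : Bn) : in_t2 L -> supported (fun S => irb \notin S) L.
Proof. by move=> t2L; apply/supportedP => S /t2L [i [j [_ ->]]]; rewrite !inE negb_or !irb_iT. Qed.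

Lemma LTrho_no_W j : supported (fun S => iW \notin S) (LTrho E j).
Proof.
apply/supportedN/supported_sum => i _; apply/supportedZ/supported_mono.
by rewrite inE (negbTE (iW_iob i)).
Qed.

Lemma rho_bracket_tc (L : Bn) : in_tc L -> supported (fun S => iW \in S) (rho_bracket L).
Proof.
move=> tcL; apply: supported_sum => j _.
apply: (supported_wedge (f := predT) (g := fun S => iW \in S) (supportedT _)).
  apply/supportedP => U /sderiv_neq0 /andP[_ /tcL [k e]].
  have : iW \in iT j |: U by rewrite e !inE eqxx orbT.
  by rewrite !inE (negbTE (iW_iT j)).
by move=> S T _ _ WT; rewrite inE WT orbT.
Qed.

Lemma rho_bracket_t2 (L : Bn) : in_t2 L -> supported (fun S => iW \notin S) (rho_bracket L).
Proof.
move=> t2L; apply: supported_sum => j _.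
apply: (supported_wedge (g := fun S => iW \notin S) (LTrho_no_W j)).
  apply/supportedP => U /sderiv_neq0 /andP[_ /t2L [i [k [_ e]]]]; apply/negP => WU.
  have : iW \in iT j |: U by rewrite !inE WU orbT.
  by rewrite e !inE (negbTE (iW_iT i)) (negbTE (iW_iT k)).
by move=> S T _ WS WT; rewrite inE negb_or WS WT.
Qed.

Lemma dbarGen_supported a :
  supported (fun S => [&& ~~ odd #|S|, irb \notin S & iW \in S]) (dbarGen E a).
Proof.
apply: supported_sum => j _; case: ifP => _; last by apply/supportedP => S; rewrite ext0E eqxx.
apply: supported_sum => k _; apply: supportedZ.
rewrite wedge_mono disjoints1 inE eq_sym (negbTE (iW_iob k)) /=.
apply/supportedZ/supported_mono; rewrite cardsU1 cards1 !inE.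
by rewrite (negbTE (irb_iob k)) (negbTE irb_iW) eq_sym (negbTE (iW_iob k)) eqxx orbT.
Qed.

Lemma dbarGen_even a : ext_even (dbarGen E a).
Proof. by apply: (supportedW (dbarGen_supported a)) => S /and3P[]. Qed.

Lemma dbarGen_no_rho a : supported (fun S => irb \notin S) (dbarGen E a).
Proof. by apply: (supportedW (dbarGen_supported a)) => S /and3P[]. Qed.

Lemma dbar_W (Y : Bn) : supported (fun S => iW \in S) (dbar E Y).
Proof.
apply: supported_sum => a _.
apply: (supported_wedge (dbarGen_supported a) (g := predT) (supportedT _)).
by move=> S T _ /and3P[_ _ WS] _; rewrite inE WS.
Qed.

Lemma dbar_wedge (P Q : Bn) :
  dbar E (wedge P Q) = wedge (dbar E P) Q + wedge (parity P) (dbar E Q).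
Proof. exact: derivation_wedge dbarGen_even P Q. Qed.

Lemma sderiv_rho_dbar (P : Bn) : sderiv irb (dbar E P) = - dbar E (sderiv irb P).
Proof. exact: sderiv_derivation dbarGen_even irb P dbarGen_no_rho. Qed.

Lemma dbar_rho : dbar E (gen irb : Bn) = 0.
Proof.
apply: big1 => a _; have [->|na] := eqVneq a irb.
  by rewrite /dbarGen big1 ?wedge0l // => j _; rewrite (negbTE (irb_iT j)).
by rewrite sderiv_mono inE (negbTE na) wedge0r.
Qed.

Lemma Bdeg_wedge p q p' q' (Y R : Bn) :
  Bdeg p q Y -> Bdeg p' q' R -> Bdeg (p + p') (q + q') (wedge Y R).
Proof.
move=> degY degR U /wedge_neq0 [S [T [dST <- YS RT]]].
have [pS qS] := degY S YS; have [pT qT] := degR T RT.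
by rewrite !card_setIdU // pS qS pT qT.
Qed.

Lemma Bdeg_sderiv_rho p q (x : Bn) : Bdeg p q.+1 x -> Bdeg p q (sderiv irb x).
Proof.
move=> degx U /sderiv_neq0 /andP[rhoU /degx [pU qU]]; split.
  rewrite -pU; apply: eq_card => a; rewrite !inE.
  by have [->|] := eqVneq a irb; rewrite ?(negbTE rhoU).
have e : [set a in irb |: U | a.2] = irb |: [set a in U | a.2].
  by apply/setP => a; rewrite !inE; have [->|] := eqVneq a irb.
by move: qU; rewrite e cardsU1 inE (negbTE rhoU) => -[].
Qed.

Lemma sderiv_rho_Bdeg0 p (x : Bn) : Bdeg p 0 x -> sderiv irb x = 0.
Proof.
move=> degx; apply/sderiv_eq0/supportedP => S /degx [_ qS]; apply: contra_eqN qS => rhoS.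
by rewrite -lt0n; apply/card_gt0P; exists irb; rewrite inE rhoS.
Qed.

Lemma Bdeg_rho : Bdeg 0 1 (gen irb : Bn).
Proof.
move=> S; rewrite monoE; have [-> _|] := eqVneq S [set irb]; last by rewrite eqxx.
have -> : [set a in [set irb] | a.2] = [set irb].
  by apply/setP => a; rewrite !inE andb_idr // => /eqP ->.
have -> : [set a in [set irb] | ~~ a.2] = set0.
  by apply/setP => a; rewrite !inE; have [->|] := eqVneq a irb.
by rewrite cards0 cards1.
Qed.

Lemma E1_degenerate_iff (L : Bn) : supported (fun S => irb \notin S) L ->
  E1_degenerate E L <-> dbar_exact_in E 1 0 (rho_bracket L).
Proof.
move=> Lrho; split=> [|[Y [degY rhoY]] p q x degx closedx].
  by move=> /(_ 0%N 1%N (gen irb) Bdeg_rho dbar_rho); rewrite sch_rho.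
have closed_ix : dbar E (sderiv irb x) = 0.
  by apply/eqP; rewrite -oppr_eq0 -sderiv_rho_dbar closedx sderiv0.
rewrite sch_rho_factor //; case: q degx {closedx} => [|q] degx /=.
  by rewrite (sderiv_rho_Bdeg0 degx) wedge0r.
exists (wedge Y (sderiv irb x)); split; first exact: Bdeg_wedge degY (Bdeg_sderiv_rho degx).
by rewrite dbar_wedge closed_ix wedge0r addr0 rhoY.
Qed.

Lemma rho_exact_split (L1 L2 : Bn) : in_tc L1 -> in_t2 L2 ->
  dbar_exact_in E 1 0 (rho_bracket L1 + rho_bracket L2) <->
  dbar_exact_in E 1 0 (rho_bracket L1) /\ rho_bracket L2 = 0.
Proof.
move=> tc1 t22; split=> [[Y [degY eY]]|[[Y [degY eY]] ->]]; last by exists Y; rewrite addr0.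
have rho2 : rho_bracket L2 = 0.
  exact: supported_predC_eq0 (rho_bracket_tc tc1) (rho_bracket_t2 t22) (dbar_W Y) eY.
by split=> //; exists Y; rewrite -eY rho2 addr0.
Qed.

End Model.

Theorem mainTheorem10 (C : numClosedFieldType) (n : nat) (E : 'M[C]_n)
  (Lam1 Lam2 : B C n) :
  center_is_c E ->
  in_tc Lam1 -> in_t2 Lam2 ->
  dbar E (Lam1 + Lam2) = 0 ->
  sch E (Lam1 + Lam2) (Lam1 + Lam2) = 0 ->
  E1_degenerate E (Lam1 + Lam2) <->
  (dbar_exact_in E 1 0 (sch E Lam1 (gen (@irb n)))
   /\ forall X : B C n, sch E Lam2 X = 0).
Proof.
move=> _ tc1 t22 _ _.
have rho1 := in_tc_no_rho tc1; have rho2 := in_t2_no_rho t22.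
apply: (iff_trans (E1_degenerate_iff E (supportedD rho1 rho2))).
rewrite rho_bracketD sch_rho //; apply: (iff_trans (rho_exact_split E tc1 t22)).
by split=> -[exact1 central2]; split=> //; apply/(sch_eq0_iff E rho2).
Qed.
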